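(* Let $h$ be an odd positive integer, $m=3h$, $e=3^h$. For $b\in\mathrm{GF}(3^m)^*$ let $N_{(b,0)}$ be the number of $y\in\mathrm{GF}(3^m)$ satisfying simultaneously $\mathrm{Tr}(y^{e+1}+y^2)=0$ and $\mathrm{Tr}(by^{e+1})=0$. Then for every $b\in\mathrm{GF}(3^m)^*$, $N_{(b,0)}\in\{3^{m-2},\ 3^{m-2}+2\cdot3^{2(h-1)},\ 3^{m-2}-2\cdot3^{2(h-1)}\}$.
   Context: $\mathrm{Tr}$ denotes the absolute trace from $\mathrm{GF}(3^m)$ onto $\mathrm{GF}(3)$. *)

From HB Require Import structures.
From mathcomp Require Import all_boot all_order all_algebra all_field.
Set Implicit Arguments. Unset Strict Implicit. Unset Printing Implicit Defensive.
Import GRing.Theory.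
Local Open Scope ring_scope.

(* Absolute trace of GF(3^m) onto GF(3): Tr(x) = sum_{i<m} x^(3^i).
   (Its values lie in the prime field GF(3) inside F.) *)
Definition Tr3 (F : finFieldType) (m : nat) (x : F) : F :=
  \sum_(i < m) x ^+ (3 ^ i)%N.

From HB Require Import structures.
From mathcomp Require Import all_boot all_order all_algebra all_field.
From mathcomp Require Import zify ring.
Set Implicit Arguments. Unset Strict Implicit. Unset Printing Implicit Defensive.
Import GRing.Theory.
Local Open Scope ring_scope.

(* N counts the common zeros of Q1 y = Tr(y^(e+1) + y^2) and Q2 y = Tr(b y^(e+1)),
   two GF(3)-valued quadratic forms on GF(3^m). Counting the lines of GF(3)^2
   through the origin that contain (Q1 y, Q2 y) gives
   3 N + 3^m = Z(Q1) + Z(Q2) + Z(Q1 + Q2) + Z(Q1 - Q2), where Z counts zeros.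
   For each form Q = Tr(c y^(e+1) + u y^2), whose polar form is Tr(z L(y)) with L
   linear, counting pairs (y, z) with Q y = Q z, and comparing the pairs with
   Q y + Q z = 1 and = -1 via (y, z) |-> (y + z, y - z), gives
   3 Z(Q) - 3^m = 0 or (3 Z(Q) - 3^m)^2 = 4 3^m |ker L|. The kernel of L has
   1, 3^h or 3^(2h) elements, and as h is odd only 3^h makes this a square. It is
   trivial for Q1 and Q2, and it cannot be nontrivial for both Q1 + Q2 and Q1 - Q2. *)

Definition trit (R : nzRingType) (t : R) : Prop := [\/ t = 0, t = 1 | t = -1].

Lemma cube_id_trit (R : idomainType) (t : R) : t ^+ 3 = t -> trit t.
Proof.
move=> t3; have : t * (t - 1) * (t + 1) = 0.
  have -> : t * (t - 1) * (t + 1) = t ^+ 3 - t by ring.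
  by rewrite t3 subrr.
move/eqP; rewrite !mulf_eq0 subr_eq0 addr_eq0 => /orP[/orP[]|] /eqP ->.
- by constructor 1.
- by constructor 2.
- by constructor 3.
Qed.

Lemma card_set_sumb (T : finType) (P : pred T) :
  #|[set x | P x]| = (\sum_(x : T) (P x : nat))%N.
Proof. by rewrite -sum1dep_card big_mkcond; apply: eq_bigr => x _; case: (P x). Qed.

Lemma card_le_image_fibres (T R : finType) (f : T -> R) k :
  (forall t, #|[set x | f x == t]| <= k)%N -> (#|T| <= #|f @: [set: T]| * k)%N.
Proof.
move=> fibre_le; rewrite -cardsT -sum1_card (partition_big_imset f) /=.
rewrite -sum_nat_const; apply: leq_sum => t _; apply: leq_trans (fibre_le t).
by rewrite card_set_sumb big_mkcond /=; apply: leq_sum => x _; rewrite inE; case: eqP.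
Qed.

Lemma size_Xnaddl (R : nzRingType) n (q : {poly R}) :
  (size q <= n)%N -> size ('X^n + q) = n.+1.
Proof. by move=> size_q; rewrite size_polyDl size_polyXn. Qed.

Lemma card_roots_lt (F : finFieldType) (p : {poly F}) (A : {set F}) :
  p != 0 -> {in A, forall x, root p x} -> (#|A| < size p)%N.
Proof.
move=> p0 hA; rewrite cardE; apply: max_poly_roots => //; last exact: enum_uniq.
by apply/allP => x; rewrite mem_enum; exact: hA.
Qed.

Lemma card_roots_le (F : finFieldType) (p : {poly F}) n :
  (size p = n.+1)%N -> (#|[set x | root p x]| <= n)%N.
Proof.
move=> size_p; rewrite -ltnS -size_p card_roots_lt // => [|x]; last by rewrite inE.
by rewrite -size_poly_eq0 size_p.
Qed.

Section Char3.

Variable F : fieldType.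
Hypothesis F3 : 3 \in [pchar F].

Lemma char3_two : 2%:R = -1 :> F.
Proof. by apply/eqP; rewrite -subr_eq0 opprK -(natrD F 2 1) pcharf0. Qed.

Lemma char3_add11 : 1 + 1 = -1 :> F.
Proof. by rewrite -(natrD F 1 1) char3_two. Qed.

Lemma char3_two_neq0 : 2%:R != 0 :> F.
Proof. by rewrite char3_two oppr_eq0 oner_eq0. Qed.

Lemma char3_add3 (x : F) : x + x + x = 0.
Proof. by rewrite -[x + x]mulr2n -mulrSr -mulr_natl pcharf0 ?mul0r. Qed.

Lemma char3_oneN1 : (1 : F) != -1.
Proof. by rewrite -subr_eq0 opprK char3_add11 oppr_eq0 oner_eq0. Qed.

(* The four lines of GF(3)^2 through the origin: a point (a, c) lies on exactly
   one of them, unless it is the origin, which lies on all four. *)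
Lemma trit_lines_eq0 (a c : F) : trit a -> trit c ->
  ((a == 0%R) + (c == 0%R) + (a + c == 0)%R + (a - c == 0)%R =
   1 + 3 * ((a == 0%R) && (c == 0%R)))%N.
Proof.
have eNN : -1 + -1 = 1 :> F by rewrite -opprD char3_add11 opprK.
by case=> ->; case=> ->; rewrite ?(addr0, add0r, subr0, sub0r, subrr, addNr, addrN,
  opprK, char3_add11, eNN, oppr0, eqxx, oner_eq0, oppr_eq0).
Qed.

End Char3.

Section TritCount.

Variables (T : finType) (F : fieldType).
Hypothesis F3 : 3 \in [pchar F].

Lemma sum_trit (g : T -> F) (G : F -> nat) : (forall x, trit (g x)) ->
  (\sum_x G (g x) = #|[set x | g x == 0%R]| * G 0%R + #|[set x | g x == 1%R]| * G 1%R
                    + #|[set x | g x == (-1)%R]| * G (-1)%R)%N.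
Proof.
move=> g_trit; have n1N := char3_oneN1 F3.
have [n10 nN0] : ((1 : F) == 0) = false /\ ((-1 : F) == 0) = false.
  by rewrite oppr_eq0 oner_eq0.
rewrite !card_set_sumb !big_distrl -!big_split /=; apply: eq_bigr => x _.
case: (g_trit x) => ->; rewrite ?eqxx ?(eq_sym (0 : F)) ?n10 ?nN0.
all: by rewrite ?(eq_sym (-1 : F)) ?(negbTE n1N) /= !mul1n !mul0n ?addn0 ?add0n.
Qed.

Lemma card_trit (g : T -> F) : (forall x, trit (g x)) ->
  #|T| = (#|[set x | g x == 0%R]| + #|[set x | g x == 1%R]| + #|[set x | g x == (-1)%R]|)%N.
Proof. by move/(sum_trit (fun=> 1%N)); rewrite !muln1 sum1_card. Qed.

Lemma card_common_zeros (g1 g2 : T -> F) :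
    (forall x, trit (g1 x)) -> (forall x, trit (g2 x)) ->
  (3 * #|[set x | (g1 x == 0%R) && (g2 x == 0%R)]| + #|T| =
   #|[set x | g1 x == 0%R]| + #|[set x | g2 x == 0%R]|
   + #|[set x | (g1 x + g2 x == 0)%R]| + #|[set x | (g1 x - g2 x == 0)%R]|)%N.
Proof.
move=> g1_trit g2_trit; rewrite -[#|T|]sum1_card !card_set_sumb big_distrr -!big_split /=.
by apply: eq_bigr => x _; rewrite trit_lines_eq0 // addnC.
Qed.

End TritCount.

Section Trace.

Variables (F : finFieldType) (m : nat).
Hypothesis F3 : 3 \in [pchar F].

Lemma expn3D (x y : F) i : (x + y) ^+ (3 ^ i) = x ^+ (3 ^ i) + y ^+ (3 ^ i).
Proof. by apply: exprDn_pchar; rewrite pnatX pnatE ?F3. Qed.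

Lemma Tr3D (x y : F) : Tr3 m (x + y) = Tr3 m x + Tr3 m y.
Proof. by rewrite /Tr3 -big_split; apply: eq_bigr => i _; exact: expn3D. Qed.

Lemma Tr3_0 : Tr3 m (0 : F) = 0.
Proof. by rewrite /Tr3 big1 // => i _; rewrite expr0n expn_eq0. Qed.

Lemma Tr3N (x : F) : Tr3 m (- x) = - Tr3 m x.
Proof. by apply/eqP; rewrite -subr_eq0 opprK -Tr3D addNr Tr3_0. Qed.

Hypothesis cardF : #|F| = (3 ^ m)%N.

Lemma Tr3_cube (x : F) : Tr3 m (x ^+ 3) = Tr3 m x.
Proof.
rewrite /Tr3; case: m cardF => [|n] cardFn; first by rewrite !big_ord0.
rewrite big_ord_recr big_ord_recl /= -exprM -expnS -cardFn expf_card expr1 addrC.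
by congr (_ + _); apply: eq_bigr => i _; rewrite -exprM -expnS.
Qed.

Lemma Tr3_expn3 (x : F) j : Tr3 m (x ^+ (3 ^ j)) = Tr3 m x.
Proof. by elim: j => [|j IHj]; rewrite ?expr1 // expnSr exprM Tr3_cube. Qed.

Lemma Tr3_trit (x : F) : trit (Tr3 m x).
Proof.
apply: cube_id_trit; rewrite -(pFrobenius_autE F3) /Tr3 rmorph_sum /=.
rewrite -[RHS](Tr3_cube x); apply: eq_bigr => i _.
by rewrite pFrobenius_autE exprAC.
Qed.

Lemma Tr3_exists1 : exists x : F, Tr3 m x = 1.
Proof.
have m_gt0 : (0 < m)%N.
  by case: m cardF => // cardF1; have := finNzRing_gt1 F; rewrite cardF1.
pose P : {poly F} := \sum_(i < m) 'X^(3 ^ i).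
have P_coef1 : P`_1 = 1.
  rewrite /P coef_sum (bigD1 (Ordinal m_gt0)) //= big1 ?addr0 ?coefXn //.
  move=> [[|i] lt_im] /= ne_i0; first by [].
  by rewrite coefXn eqn_leq [(_ <= 1)%N]leqNgt (ltn_exp2l 0) //= andbF.
have P_size : (size P <= (3 ^ m.-1).+1)%N.
  apply/leq_sizeP => j lt_j; rewrite /P coef_sum big1 // => i _.
  rewrite coefXn; case: eqP => // eq_j; move: lt_j.
  by rewrite eq_j ltnNge leq_exp2l // -ltnS prednK // ltn_ord.
have [x Trx] : exists x : F, Tr3 m x != 0.
  apply/existsP; rewrite -negb_forall; apply/negP => /forallP Tr0.
  have P_nz : P != 0.
    by apply: contra_eq_neq P_coef1 => ->; rewrite coef0 eq_sym oner_eq0.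
  have P_rootsF : {in [set: F], forall x, root P x}.
    by move=> x _; rewrite /root horner_sum; under eq_bigr do rewrite hornerXn; exact: Tr0.
  move: (leq_trans (card_roots_lt P_nz P_rootsF) P_size).
  by rewrite cardsT cardF ltnS leqNgt -(prednK m_gt0) expnS ltn_Pmull ?expn_gt0.
have [Tr_x0|Tr_x1|Tr_xN1] := Tr3_trit x; first by rewrite Tr_x0 eqxx in Trx.
  by exists x.
by exists (- x); rewrite Tr3N Tr_xN1 opprK.
Qed.

Lemma card_Tr3_fibre (a t : F) : a != 0 -> trit t ->
  (3 * #|[set z | Tr3 m (z * a)%R == t]| = 3 ^ m)%N.
Proof.
move=> a_nz t_trit; have [x0 Trx0] := Tr3_exists1.
pose fibre s := [set z | Tr3 m (z * a) == s].
have fibreE s : trit s -> #|fibre s| = #|fibre 0|.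
  move=> s_trit; pose w := s * (x0 / a).
  have Trw : Tr3 m (w * a) = s.
    rewrite /w -mulrA mulfVK //.
    by case: s_trit => ->; rewrite ?mul0r ?Tr3_0 ?mul1r ?mulN1r ?Tr3N ?Trx0.
  have -> : fibre s = [set z + w | z in fibre 0].
    apply/setP => z; rewrite inE; apply/eqP/imsetP => [Trz|[z0 + ->]].
      by exists (z - w); rewrite ?subrK // inE mulrBl Tr3D Tr3N Trz Trw subrr.
    by rewrite inE mulrDl Tr3D Trw => /eqP ->; rewrite add0r.
  by rewrite card_imset //; exact: addIr.
have := card_trit F3 (fun z => Tr3_trit (z * a)); rewrite cardF -!/(fibre _).
rewrite (fibreE t) // (fibreE 1) ?(fibreE (-1)) => [->||].
  by rewrite !mulSn mul0n addn0 addnA.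
all: by [constructor 1 | constructor 2 | constructor 3].
Qed.

End Trace.

Lemma trit_counts_excess (n0 n1 n2 P r : nat) :
  P = (n0 + n1 + n2)%N ->
  (3 * (n0 * n0 + n1 * n1 + n2 * n2) = P * P + 2 * P * r)%N ->
  (2 * n0 * n1 + n2 * n2 = 2 * n0 * n2 + n1 * n1)%N ->
  (3 * n0 = P)%N \/ (((3 * n0)%:Z - P%:Z) ^+ 2 = (4 * P * r)%:Z)%R.
Proof.
move=> sumP sqP balance.
have : ((n1%:Z - n2%:Z) * (2 * n0%:Z - n1%:Z - n2%:Z) = 0)%R by lia.
move/eqP; rewrite mulf_eq0 => /orP[/eqP n12|/eqP n0_avg]; last by left; lia.
have eq12 : n1 = n2 by lia.
by right; subst n2 P; rewrite expr2; nia.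
Qed.

Section TritForm.

Variables (F : finFieldType) (m : nat).
Hypotheses (F3 : 3 \in [pchar F]) (cardF : #|F| = (3 ^ m)%N).
Variables Q L : F -> F.
Hypothesis Q_trit : forall y, trit (Q y).
Hypothesis Q_polar : forall y z, Q (y + z) = Q y + Q z + Tr3 m (z * L y).
Hypothesis Q_even : forall y, Q (- y) = Q y.

Local Notation n0 := #|[set y | Q y == 0%R]|.
Local Notation n1 := #|[set y | Q y == 1%R]|.
Local Notation n2 := #|[set y | Q y == (-1)%R]|.
Local Notation r := #|[set y | L y == 0%R]|.

Lemma tritform_ker w : L w = 0 -> Q w = 0.
Proof.
move=> Lw; have Q0 : Q 0 = 0.
  have := Q_polar 0 0; rewrite mul0r Tr3_0 !addr0 => Q00.
  by apply: (@addrI _ (Q 0)); rewrite -Q00 addr0.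
have := Q_polar w (- w); rewrite Lw mulr0 Tr3_0 addr0 subrr Q_even Q0 => /esym/eqP.
by rewrite -mulr2n -mulr_natr mulf_eq0 (negbTE (char3_two_neq0 F3)) orbF => /eqP.
Qed.

Lemma tritform_sum_sq :
  (3 * (n0 * n0 + n1 * n1 + n2 * n2) = 3 ^ m * 3 ^ m + 2 * 3 ^ m * r)%N.
Proof.
pose D := (\sum_y \sum_z ((Q y == Q z) : nat))%N.
have D_sq : D = (n0 * n0 + n1 * n1 + n2 * n2)%N.
  rewrite /D (eq_bigr (fun y => #|[set z | Q z == Q y]|)); last first.
    by move=> y _; rewrite card_set_sumb; apply: eq_bigr => z _; rewrite eq_sym.
  exact: (sum_trit F3 (fun t => #|[set z | Q z == t]|)).
(* substituting z := y + w, the condition Q y = Q (y + w) is affine in y *)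
have D_fibres : D = (\sum_w #|[set y | Tr3 m (y * L w)%R == (- Q w)%R]|)%N.
  rewrite /D exchange_big /= (eq_bigr (fun z => \sum_w ((Q (z + w)%R == Q z) : nat))%N).
    rewrite exchange_big /=; apply: eq_bigr => w _; rewrite card_set_sumb.
    apply: eq_bigr => z _; rewrite addrC Q_polar.
    have -> : Q w + Q z + Tr3 m (z * L w) = Q z + (Tr3 m (z * L w) - - Q w) by ring.
    by rewrite -{2}[Q z]addr0 (inj_eq (addrI _)) subr_eq0.
  by move=> z _; rewrite (reindex_inj (addrI z)).
have fibre_card w : (3 * #|[set y | Tr3 m (y * L w)%R == (- Q w)%R]| =
                     3 ^ m + 2 * 3 ^ m * (L w == 0%R))%N.
  have [Lw|Lw_nz] := eqVneq (L w) 0; last first.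
    rewrite card_Tr3_fibre ?muln0 ?addn0 //.
    by case: (Q_trit w) => ->; rewrite ?oppr0 ?opprK; [constructor 1|constructor 3|constructor 2].
  rewrite Lw (tritform_ker Lw) oppr0.
  suff -> : [set y | Tr3 m (y * 0) == 0] = [set: F] by rewrite cardsT cardF /=; lia.
  by apply/setP => y; rewrite !inE mulr0 Tr3_0 eqxx.
rewrite -D_sq D_fibres big_distrr /= (eq_bigr _ (fun w _ => fibre_card w)) big_split /=.
by rewrite sum_nat_const cardT -cardE cardF -big_distrr /= -card_set_sumb.
Qed.

Lemma tritform_balance :
  (2 * n0 * n1 + n2 * n2 = 2 * n0 * n2 + n1 * n1)%N.
Proof.
pose M t := (\sum_y \sum_z ((Q y + Q z == t)%R : nat))%N.
have ME t : M t = (n0 * #|[set z | Q z == (t - 0)%R]| + n1 * #|[set z | Q z == (t - 1)%R]|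
                   + n2 * #|[set z | Q z == (t - -1)%R]|)%N.
  rewrite /M (eq_bigr (fun y => #|[set z | Q z == t - Q y]|)); last first.
    move=> y _; rewrite card_set_sumb; apply: eq_bigr => z _.
    by rewrite [in RHS]eq_sym subr_eq addrC eq_sym.
  exact: (sum_trit F3 (fun s => #|[set z | Q z == t - s]|)).
(* (y, z) |-> (y + z, y - z) is a bijection of F^2 that negates Q y + Q z *)
have M1N1 : M 1 = M (-1).
  pose phi (p : F * F) := (p.1 + p.2, p.1 - p.2).
  pose psi (p : F * F) := (- (p.1 + p.2), p.2 - p.1).
  have phiK : cancel phi psi.
    move=> [y z]; rewrite /phi /psi /=; congr (_, _).
      by apply/eqP; rewrite -subr_eq0 -(char3_add3 F3 (- y)); apply/eqP; ring.
    by apply/eqP; rewrite -subr_eq0 -(char3_add3 F3 (- z)); apply/eqP; ring.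
  rewrite /M !pair_bigA /= (reindex_inj (can_inj phiK)) /=.
  apply: eq_bigr => [[y z]] _ /=.
  have -> : Q (y + z) + Q (y - z) = - (Q y + Q z).
    rewrite !Q_polar Q_even mulNr Tr3N //; apply/eqP; rewrite -subr_eq0 opprK.
    by rewrite -(char3_add3 F3 (Q y + Q z)); apply/eqP; ring.
  by rewrite eqr_oppLR.
move: M1N1; rewrite !ME !subr0 !opprK !subrr char3_add11 //.
rewrite -opprD char3_add11 // opprK addNr.
by set k0 := n0; set k1 := n1; set k2 := n2; lia.
Qed.

Lemma tritform_zeros :
  (3 * n0 = 3 ^ m)%N \/ (((3 * n0)%:Z - (3 ^ m)%:Z) ^+ 2 = (4 * 3 ^ m * r)%:Z)%R.
Proof.
apply: (trit_counts_excess (n1 := n1) (n2 := n2)) tritform_sum_sq tritform_balance.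
by rewrite -cardF; exact: card_trit.
Qed.

End TritForm.

Lemma count_from_excesses (N M A : nat) (X3 X4 : int) :
  ((9 * N)%:Z = (9 * M)%:Z + X3 + X4)%R ->
  [\/ X3 = 0, X3 = (18 * A)%:Z | X3 = - (18 * A)%:Z]%R ->
  [\/ X4 = 0, X4 = (18 * A)%:Z | X4 = - (18 * A)%:Z]%R ->
  (X3 = 0 \/ X4 = 0)%R ->
  [\/ N = M, N = (M + 2 * A)%N | N = (M - 2 * A)%N].
Proof.
move=> N_eq X3_cases X4_cases [X3_0|X4_0]; move: N_eq.
- by rewrite X3_0; case: X4_cases => ->; [constructor 1 | constructor 2 | constructor 3]; lia.
- by rewrite X4_0; case: X3_cases => ->; [constructor 1 | constructor 2 | constructor 3]; lia.
Qed.

Lemma expn3_mod4 h : odd h -> (3 ^ h %% 4 = 3)%N.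
Proof.
move=> h_odd; rewrite -(odd_double_half h) h_odd addnC expnD -mul2n expnM.
by rewrite -modnMml -modnXm exp1n.
Qed.

Lemma sqr_neq_4expn3 (X : int) j : odd j -> X ^+ 2 != (4 * 3 ^ j)%:Z.
Proof.
move=> j_odd; apply/eqP => /(congr1 absz); rewrite abszX absz_nat => eqX.
have X_gt0 : (0 < `|X|)%N.
  rewrite lt0n; apply/eqP => X0; move: eqX; rewrite X0 exp0n // => /esym/eqP.
  by rewrite muln_eq0 expn_eq0.
have := congr1 (logn 3) eqX; rewrite lognX lognM ?expn_gt0 // pfactorK //.
by rewrite (_ : logn 3 4 = 0%N) // add0n => logX; move: j_odd; rewrite -logX oddM.
Qed.

Definition qform (F : finFieldType) (m e : nat) (c u y : F) : F :=
  Tr3 m (c * y ^+ e.+1 + u * y ^+ 2).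

(* The term (c y)^(e^2) comes from Tr(c y z^e) = Tr(z (c y)^(e^2)), as x^(e^3) = x. *)
Definition qpolar (F : fieldType) (e : nat) (c u y : F) : F :=
  c * y ^+ e + (c * y) ^+ (e * e) + 2%:R * u * y.

Section FrobeniusPower.

Variables (F : finFieldType) (h : nat).
Hypothesis cardF : #|F| = (3 ^ (3 * h))%N.

Local Notation e := (3 ^ h)%N.

Lemma pchar3 : 3 \in [pchar F].
Proof. exact: card_finPcharP cardF _. Qed.

Lemma frobe_gt1 : (1 < e)%N.
Proof.
case: h cardF => [|n] cardFn; last by rewrite -{1}(expn0 3) ltn_exp2l.
by have := finNzRing_gt1 F; rewrite cardFn.
Qed.

Lemma frobeD (x y : F) : (x + y) ^+ e = x ^+ e + y ^+ e.
Proof. exact: expn3D pchar3 x y h. Qed.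

Lemma frobe0 : (0 : F) ^+ e = 0.
Proof. by rewrite expr0n expn_eq0. Qed.

Lemma frobeN (x : F) : (- x) ^+ e = - x ^+ e.
Proof. by apply/eqP; rewrite -subr_eq0 opprK -frobeD addNr frobe0. Qed.

Lemma frobe3 (x : F) : ((x ^+ e) ^+ e) ^+ e = x.
Proof.
rewrite -!exprM -!expnD (_ : (h + (h + h) = 3 * h)%N) -?cardF ?expf_card //.
by rewrite !mulSn mul0n addn0.
Qed.

Local Notation relTr x := (x + x ^+ e + (x ^+ e) ^+ e).

(* relTr maps F (of size e^3) into the field fixed by x |-> x^e (at most e
   elements), with fibres that are cosets of its kernel (at most e^2 elements,
   being roots of a polynomial of degree e^2); so both bounds are attained. *)
Lemma card_frobe_fixed_relTr_ker :
  #|[set x : F | x ^+ e == x]| = e /\ #|[set x : F | relTr x == 0]| = (e * e)%N.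
Proof.
have e_gt1 := frobe_gt1; have e_gt0 : (0 < e)%N by apply: ltnW.
set K := [set x : F | x ^+ e == x]; set ker := [set x : F | relTr x == 0].
have K_le : (#|K| <= e)%N.
  rewrite (_ : K = [set x | root ('X^e - 'X) x]); last first.
    by apply/setP => x; rewrite !inE rootE !hornerE subr_eq0.
  by apply: card_roots_le; rewrite size_Xnaddl // size_polyN size_polyX.
have ker_le : (#|ker| <= e * e)%N.
  rewrite (_ : ker = [set x | root ('X + 'X^e + 'X^(e * e)) x]); last first.
    by apply/setP => x; rewrite !inE rootE !hornerE -exprM.
  apply: card_roots_le; rewrite addrC size_Xnaddl // addrC size_Xnaddl ?size_polyX //.
  exact: ltn_Pmull.
have im_relTr : [set relTr x | x in [set: F]] \subset K.
  by apply/subsetP => _ /imsetP[x _ ->]; rewrite inE !frobeD frobe3 addrC addrA.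
have fibre_le (t : F) : (#|[set x | relTr x == t]| <= #|ker|)%N.
  have [x0 /= /eqP relTr_x0|no_x] := pickP [pred x | relTr x == t]; last first.
    by rewrite (_ : [set x | _] = set0) ?cards0 //; apply/setP => x; rewrite !inE; exact: no_x.
  rewrite -(card_imset _ (addIr (- x0))); apply/subset_leq_card/subsetP.
  move=> _ /imsetP[x /[!inE] /eqP relTr_x ->].
  have -> : relTr (x - x0) = relTr x - relTr x0 by rewrite !frobeD !frobeN; ring.
  by rewrite relTr_x relTr_x0 subrr.
have := leq_trans (card_le_image_fibres fibre_le) (leq_mul (subset_leq_card im_relTr) (leqnn _)).
rewrite cardF (_ : (3 * h = h + h + h)%N) ?expnD; last by rewrite !mulSn mul0n addn0 addnA.
move=> le_e3; have ee_gt0 : (0 < e * e)%N by rewrite muln_gt0 e_gt0.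
have ker_ge : (e * e <= #|ker|)%N.
  by rewrite -(leq_pmul2l e_gt0) mulnA (leq_trans le_e3) // leq_mul2r K_le orbT.
have K_ge : (e <= #|K|)%N.
  by rewrite -(leq_pmul2r ee_gt0) mulnA (leq_trans le_e3) // leq_mul2l ker_le orbT.
by split; apply/eqP; rewrite eqn_leq ?K_le ?K_ge ?ker_le ?ker_ge.
Qed.

Local Notation m := (3 * h)%N.

Lemma qform_trit (c u y : F) : trit (qform m e c u y).
Proof. exact: Tr3_trit pchar3 cardF _. Qed.

Lemma qpolarE (c u y : F) :
  qpolar e c u y = c * y ^+ e + (c ^+ e) ^+ e * (y ^+ e) ^+ e - u * y.
Proof. by rewrite /qpolar exprM !exprMn (char3_two pchar3) mulN1r mulNr. Qed.

Lemma qform_polar (c u y z : F) :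
  qform m e c u (y + z) = qform m e c u y + qform m e c u z + Tr3 m (z * qpolar e c u y).
Proof.
have F3 := pchar3.
have Tr_cross : Tr3 m (z * (c * y ^+ e + 2%:R * u * y) + c * y * z ^+ e) =
                Tr3 m (z * qpolar e c u y).
  rewrite Tr3D // -[Tr3 m (c * y * z ^+ e)](Tr3_expn3 cardF _ (h + h)) expnD.
  rewrite !exprMn -!exprM mulnA !exprM frobe3 -Tr3D //.
  by congr (Tr3 _ _); rewrite qpolarE (char3_two F3); ring.
rewrite -Tr_cross /qform -!Tr3D //; congr (Tr3 _ _).
by rewrite exprSr frobeD !exprSr; ring.
Qed.

Lemma qform_even (c u y : F) : qform m e c u (- y) = qform m e c u y.
Proof.
by rewrite /qform sqrrN exprNn -signr_odd oddS oddX orbT /= expr0 mul1r.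
Qed.

Lemma qpolar_frobe (c u y : F) :
  (qpolar e c u y) ^+ e = qpolar e (c ^+ e) (u ^+ e) (y ^+ e).
Proof. by rewrite !qpolarE frobeD frobeN frobeD !exprMn !frobe3 addrC. Qed.

Lemma qpolar0 (c u : F) : qpolar e c u 0 = 0.
Proof. by rewrite qpolarE !frobe0 !mulr0 addr0 subrr. Qed.

Lemma qpolar_frobe_eq0 (c u y : F) :
  qpolar e c u y = 0 -> qpolar e (c ^+ e) (u ^+ e) (y ^+ e) = 0.
Proof. by move=> Ly; rewrite -qpolar_frobe Ly frobe0. Qed.

Local Notation kerL c u := [set y : F | qpolar e c u y == 0].

Lemma qpolar_u0_eq0 (b y : F) : b != 0 -> qpolar e b 0 y = 0 -> y = 0.
Proof.
move=> b_nz E1; have E2 := qpolar_frobe_eq0 E1; have E3 := qpolar_frobe_eq0 E2.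
rewrite !qpolarE !frobe3 !frobe0 !mul0r !subr0 in E1 E2 E3.
set b1 := b ^+ e in E1 E2 E3; set b2 := b1 ^+ e in E1 E2 E3.
set y1 := y ^+ e in E1 E2 E3; set y2 := y1 ^+ e in E1 E2 E3.
have : 2%:R * (b * b2 * y) = 0.
  have -> : 2%:R * (b * b2 * y) =
            b * (b2 * y + b1 * y1) + b2 * (b1 * y2 + b * y) - b1 * (b * y1 + b2 * y2) by ring.
  by rewrite E1 E2 E3 !mulr0 addr0 subrr.
move/eqP; rewrite !mulf_eq0 /b2 /b1 !expf_eq0 (negbTE b_nz) (negbTE (char3_two_neq0 pchar3)).
by rewrite !andbF => /eqP.
Qed.

Lemma qpolar_11_eq0 (y : F) : qpolar e 1 1 y = 0 -> y = 0.
Proof.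
move=> E1; have E2 := qpolar_frobe_eq0 E1.
rewrite !qpolarE !frobe3 !expr1n !mul1r in E1 E2.
have y1 : y ^+ e = y.
  apply/eqP; rewrite -subr_eq0 -(mulrI_eq0 _ (lregP (char3_two_neq0 pchar3))).
  have -> : 2%:R * (y ^+ e - y) =
            (y ^+ e + (y ^+ e) ^+ e - y) - ((y ^+ e) ^+ e + y - y ^+ e) by ring.
  by rewrite E1 E2 subrr.
by move: E1; rewrite !y1 addrK.
Qed.

Lemma kerL_nontrivial (c u : F) :
  #|kerL c u| != 1%N -> exists2 y, y != 0 & qpolar e c u y = 0.
Proof.
have [y /andP[y_nz /eqP Ly] _|no_y] := pickP [pred y | (y != 0) && (qpolar e c u y == 0)].
  by exists y.
rewrite (_ : kerL c u = [set 0]) ?cards1 //; apply/setP => y; rewrite !inE.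
have [->|y_nz] := eqVneq y 0; first by rewrite qpolar0 !eqxx.
by have := no_y y; rewrite /= y_nz.
Qed.

Lemma qpolar_ker_line (c y : F) : c ^+ 2 != 1 -> y != 0 -> qpolar e c 1 y = 0 ->
  kerL c 1 = [set mu * y | mu in [set x | x ^+ e == x]].
Proof.
move=> c2_neq1 y_nz Ly.
have rel z : qpolar e c 1 z = 0 ->
    (1 - c ^+ 2) * z = ((c ^+ e) ^+ e + c * c ^+ e) * (z ^+ e) ^+ e.
  move=> E1; have E2 := qpolar_frobe_eq0 E1.
  rewrite !qpolarE !frobe3 !expr1n !mul1r in E1 E2; apply/eqP; rewrite -subr_eq0.
  have -> : (1 - c ^+ 2) * z - ((c ^+ e) ^+ e + c * c ^+ e) * (z ^+ e) ^+ e =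
            - ((c * z ^+ e + (c ^+ e) ^+ e * (z ^+ e) ^+ e - z)
               + c * (c ^+ e * (z ^+ e) ^+ e + c * z - z ^+ e)) by ring.
  by rewrite E1 E2 mulr0 addr0 oppr0.
have D_nz : 1 - c ^+ 2 != 0 by rewrite subr_eq0 eq_sym.
have y2_nz : (y ^+ e) ^+ e != 0 by rewrite !expf_neq0.
have beta_nz : (c ^+ e) ^+ e + c * c ^+ e != 0.
  by apply: contraNneq (mulf_neq0 D_nz y_nz) => beta0; rewrite rel // beta0 mul0r.
apply/setP => z; rewrite inE; apply/eqP/imsetP => [Lz|[mu /[!inE] /eqP mu_fixed ->]].
  exists (z / y); last by rewrite divfK.
  have mu2 : ((z / y) ^+ e) ^+ e = z / y.
    rewrite !exprMn !exprVn; apply/eqP; rewrite eqr_div //; apply/eqP.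
    apply: (mulfI D_nz); apply: (mulfI beta_nz).
    set D := 1 - c ^+ 2 in rel *; set beta := _ + c * c ^+ e in rel *.
    have -> : beta * (D * ((z ^+ e) ^+ e * y)) = (beta * (z ^+ e) ^+ e) * (D * y) by ring.
    have -> : beta * (D * (z * (y ^+ e) ^+ e)) = (D * z) * (beta * (y ^+ e) ^+ e) by ring.
    by rewrite -(rel z Lz) -(rel y Ly).
  by rewrite inE -[X in _ == X]frobe3 mu2.
by rewrite qpolarE !exprMn !mu_fixed -[RHS](mulr0 mu) -Ly qpolarE; ring.
Qed.

Lemma card_kerL_trivial (c u : F) :
  (forall y, qpolar e c u y = 0 -> y = 0) -> #|kerL c u| = 1%N.
Proof.
move=> ker0; rewrite (_ : kerL c u = [set 0]) ?cards1 //; apply/setP => y.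
by rewrite !inE; apply/eqP/eqP => [/ker0|->]; rewrite ?qpolar0.
Qed.

Lemma card_kerL_N1 : #|kerL (-1) 1| = (e * e)%N.
Proof.
have [_ <-] := card_frobe_fixed_relTr_ker; apply: eq_card => z; rewrite !inE qpolarE.
have sgnN1 : (-1 : F) ^+ e = -1 by rewrite -signr_odd oddX orbT expr1.
by rewrite !sgnN1 mul1r !mulN1r -!opprD oppr_eq0 addrC addrA.
Qed.

Lemma card_kerL (c : F) :
  [\/ #|kerL c 1| = 1%N, #|kerL c 1| = e | #|kerL c 1| = (e * e)%N].
Proof.
have [/eqP|c2_neq1] := eqVneq (c ^+ 2) 1.
  rewrite -subr_eq0 subr_sqr_1 mulf_eq0 subr_eq0 addr_eq0 => /orP[/eqP->|/eqP->].
    by constructor 1; exact: card_kerL_trivial qpolar_11_eq0.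
  by constructor 3; exact: card_kerL_N1.
have [ker1|/kerL_nontrivial[y y_nz Ly]] := eqVneq #|kerL c 1| 1%N; first by constructor 1.
constructor 2; rewrite (qpolar_ker_line c2_neq1 y_nz Ly) card_imset; last exact: mulIf.
by case: card_frobe_fixed_relTr_ker.
Qed.

(* y, y^e, y^(e^2) solve the linear system given by qpolar c 1 y = 0 and its two
   Frobenius conjugates; a nonzero solution forces its determinant to vanish. *)
Lemma qpolar_det_eq0 (c y : F) : y != 0 -> qpolar e c 1 y = 0 ->
  c ^+ 2 + (c ^+ e) ^+ 2 + ((c ^+ e) ^+ e) ^+ 2 + 2%:R * c * c ^+ e * (c ^+ e) ^+ e - 1 = 0.
Proof.
move=> y_nz E1; have E2 := qpolar_frobe_eq0 E1; have E3 := qpolar_frobe_eq0 E2.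
rewrite !qpolarE !frobe3 !expr1n !mul1r in E1 E2 E3.
set c1 := c ^+ e in E1 E2 E3 *; set c2 := c1 ^+ e in E1 E2 E3 *.
set y1 := y ^+ e in E1 E2 E3; set y2 := y1 ^+ e in E1 E2 E3.
apply/eqP; rewrite -(mulIr_eq0 _ (rregP y_nz)); apply/eqP.
have -> : (c ^+ 2 + c1 ^+ 2 + c2 ^+ 2 + 2%:R * c * c1 * c2 - 1) * y =
    (1 - c1 ^+ 2) * (c * y1 + c2 * y2 - y) + (c + c1 * c2) * (c1 * y2 + c * y - y1)
    + (c * c1 + c2) * (c2 * y + c1 * y1 - y2) by ring.
by rewrite E1 E2 E3 !mulr0 !addr0.
Qed.

(* Adding the determinant conditions for 1 + b and 1 - b gives p^2 = -1 for
   p = b + b^e + b^(e^2); but p^e = p and e = 3 mod 4 give p = p^3 = -p. *)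
Lemma kerL_not_both_nontrivial (b : F) : odd h ->
  #|kerL (1 + b) 1| = 1%N \/ #|kerL (1 - b) 1| = 1%N.
Proof.
move=> h_odd; have F3 := pchar3.
have [//|/kerL_nontrivial[y y_nz Ly]] := eqVneq #|kerL (1 + b) 1| 1%N; first by left.
have [//|/kerL_nontrivial[y' y'_nz Ly']] := eqVneq #|kerL (1 - b) 1| 1%N; first by right.
have := qpolar_det_eq0 y_nz Ly; have := qpolar_det_eq0 y'_nz Ly'.
rewrite !frobeD !frobeN !expr1n.
set b1 := b ^+ e; set b2 := b1 ^+ e; set p := b + b1 + b2 => det_minus det_plus.
have p2 : p ^+ 2 = -1.
  apply/eqP; rewrite -subr_eq0 opprK -(mulrI_eq0 _ (lregP (char3_two_neq0 F3))).
  have -> : 2%:R * (p ^+ 2 + 1) =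
    ((1 + b) ^+ 2 + (1 + b1) ^+ 2 + (1 + b2) ^+ 2 + 2%:R * (1 + b) * (1 + b1) * (1 + b2) - 1)
    + ((1 - b) ^+ 2 + (1 - b1) ^+ 2 + (1 - b2) ^+ 2 + 2%:R * (1 - b) * (1 - b1) * (1 - b2) - 1)
    - 3%:R * 2%:R by rewrite /p; ring.
  by rewrite det_plus det_minus (pcharf0 F3) mul0r addr0 subrr.
have p_fixed : p ^+ e = p by rewrite /p !frobeD /b2 /b1 frobe3 addrC addrA.
have p4 : p ^+ 4 = 1 by rewrite (exprM p 2 2) p2 sqrrN expr1n.
have : p = - p by rewrite -{1}p_fixed -(expr_mod _ p4) expn3_mod4 // exprSr p2 mulN1r.
move/eqP; rewrite -subr_eq0 opprK -mulr2n -mulr_natl mulf_eq0 (negbTE (char3_two_neq0 F3)).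
by move=> /eqP p0; move: p2; rewrite p0 expr0n /= => /eqP; rewrite eq_sym oppr_eq0 oner_eq0.
Qed.

Local Notation excess c u :=
  ((3 * #|[set y | qform m e c u y == 0%R]|)%:Z - (3 ^ m)%:Z)%R.

Lemma qform_excess_sq (c u : F) :
  excess c u = 0 \/ (excess c u ^+ 2 = (4 * 3 ^ m * #|kerL c u|)%:Z)%R.
Proof.
have [->|] := tritform_zeros pchar3 cardF (@qform_trit c u) (@qform_polar c u) (@qform_even c u).
  by left; rewrite subrr.
by right.
Qed.

Lemma qform_excess_ker1 (c u : F) : odd h -> #|kerL c u| = 1%N -> excess c u = 0.
Proof.
move=> h_odd ker1; have [//|] := qform_excess_sq c u; rewrite ker1 muln1.
by move/eqP; rewrite (negbTE (sqr_neq_4expn3 _ _)) // oddM h_odd.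
Qed.

Lemma qform_excess_cases (c : F) : odd h ->
  [\/ excess c 1 = 0, excess c 1 = (2 * 3 ^ (2 * h))%:Z | excess c 1 = - (2 * 3 ^ (2 * h))%:Z].
Proof.
move=> h_odd; have [ker1|kerE|kerE2] := card_kerL c.
- by constructor 1; exact: qform_excess_ker1.
- have [->|] := qform_excess_sq c 1; first by constructor 1.
  have -> : (4 * 3 ^ m * #|kerL c 1|)%:Z = ((2 * 3 ^ (2 * h))%:Z) ^+ 2.
    rewrite kerE expr2 -PoszM; congr Posz.
    by rewrite -mulnA mulnACA -!expnD; congr (_ * 3 ^ _)%N; lia.
  by move/eqP; rewrite eqf_sqr => /orP[]/eqP; [constructor 2 | constructor 3].
- have [//|] := qform_excess_sq c 1; first by constructor 1.
  move/eqP; rewrite kerE2 -mulnA -!expnD (negbTE (sqr_neq_4expn3 _ _)) //.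
  by rewrite oddD oddM h_odd addnn odd_double.
Qed.

Lemma excess_common_zeros (b : F) : odd h -> b != 0 ->
  let N := #|[set y : F | (Tr3 m (y ^+ e.+1 + y ^+ 2) == 0)
                          && (Tr3 m (b * y ^+ e.+1) == 0)]| in
  ((9 * N)%:Z = (3 ^ m)%:Z + excess (1 + b) 1 + excess (1 - b) 1)%R.
Proof.
move=> h_odd b_nz N; have F3 := pchar3.
have := card_common_zeros F3 (@qform_trit 1 1) (@qform_trit b 0).
rewrite cardF (_ : [set x | _ && _] = [set y | (Tr3 m (y ^+ e.+1 + y ^+ 2) == 0)
                                            && (Tr3 m (b * y ^+ e.+1) == 0)]); last first.
  by apply/setP => y; rewrite !inE /qform !mul1r mul0r addr0.
rewrite (_ : [set x | qform m e 1 1 x + qform m e b 0 x == 0] =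
             [set x | qform m e (1 + b) 1 x == 0]); last first.
  by apply/setP => y; rewrite !inE /qform -Tr3D //; congr (Tr3 _ _ == 0); ring.
rewrite (_ : [set x | qform m e 1 1 x - qform m e b 0 x == 0] =
             [set x | qform m e (1 - b) 1 x == 0]); last first.
  by apply/setP => y; rewrite !inE /qform -Tr3N // -Tr3D //; congr (Tr3 _ _ == 0); ring.
have := qform_excess_ker1 h_odd (card_kerL_trivial qpolar_11_eq0).
have := qform_excess_ker1 h_odd (card_kerL_trivial (fun y => @qpolar_u0_eq0 b y b_nz)).
rewrite -/N; set Z1 := #|[set x | qform m e 1 1 x == 0]|.
set Z2 := #|[set x | qform m e b 0 x == 0]|; set Z3 := #|[set x | qform m e (1 + b) 1 x == 0]|.
by set Z4 := #|[set x | qform m e (1 - b) 1 x == 0]|; lia.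
Qed.

End FrobeniusPower.

Theorem mainTheorem14 (F : finFieldType) (h : nat) (h_odd : odd h)
    (cardF : #|F| = (3 ^ (3 * h))%N) (b : F) (b_nz : b != 0) :
  let m := (3 * h)%N in
  let e := (3 ^ h)%N in
  let N := #|[set y : F | (Tr3 m (y ^+ e.+1 + y ^+ 2) == 0)
                          && (Tr3 m (b * y ^+ e.+1) == 0)]| in
  [\/ N = (3 ^ (m - 2))%N,
      N = (3 ^ (m - 2) + 2 * 3 ^ (2 * (h - 1)))%N
    | N = (3 ^ (m - 2) - 2 * 3 ^ (2 * (h - 1)))%N].
Proof.
move=> m e N; have h_gt0 : (0 < h)%N by case: h h_odd {cardF m e N}.
have expm : (3 ^ m = 9 * 3 ^ (m - 2))%N.
  by rewrite -[9%N]/(3 ^ 2)%N -expnD; congr (3 ^ _)%N; lia.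
have expA : (2 * 3 ^ (2 * h) = 18 * 3 ^ (2 * (h - 1)))%N.
  by rewrite -[18%N]/(2 * 3 ^ 2)%N -mulnA -expnD; congr (2 * 3 ^ _)%N; lia.
have := excess_common_zeros cardF h_odd b_nz; rewrite /= -/N {1}expm => N_eq.
have := qform_excess_cases cardF (1 + b) h_odd; rewrite expA => X3_cases.
have := qform_excess_cases cardF (1 - b) h_odd; rewrite expA => X4_cases.
apply: count_from_excesses N_eq X3_cases X4_cases _.
have [ker1|ker1] := kerL_not_both_nontrivial cardF b h_odd.
  by left; exact: qform_excess_ker1 cardF _ _ h_odd ker1.
by right; exact: qform_excess_ker1 cardF _ _ h_odd ker1.
Qed.
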